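(* For every integer $n\ge 1$, the functions of $r\in\mathbb N$ given by $\sum_{i=0}^{w_{n-1}(r)}|\varphi^i(\xi)|$, by $w_n(r)$, and by $\exp^n(r)$ are pairwise $\simeq$-equivalent.
   Context: Let $F_2$ be the free group on $\xi,\nu$ and let $\varphi:F_2\to F_2$ be the automorphism $\varphi(\xi)=\xi\nu\xi$, $\varphi(\nu)=\xi$; $|\cdot|$ denotes word length with respect to $\{\xi,\nu\}$. Define $w_0(r)=r$ and inductively $w_n(r)=|\varphi^{w_{n-1}(r)}(\xi)|$ for $r\in\mathbb N$. $\exp^n$ is the $n$-fold composition of the exponential function. For functions $f,g$, $f\preceq g$ means there is $C>0$ with $f(x)\le C\,g(Cx)+Cx$ for all $x$, and $f\simeq g$ means $f\preceq g$ and $g\preceq f$. *)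

From Stdlib Require Import Reals List Arith.
Open Scope R_scope.

Inductive letter := Xi | Nu | XiInv | NuInv.

Definition linv (a : letter) : letter :=
  match a with Xi => XiInv | Nu => NuInv | XiInv => Xi | NuInv => Nu end.

Definition letter_eqb (a b : letter) : bool :=
  match a, b with
  | Xi, Xi | Nu, Nu | XiInv, XiInv | NuInv, NuInv => true
  | _, _ => false end.

(* Free reduction: elements of F_2 are represented by reduced words. *)
Fixpoint red (w : list letter) : list letter :=
  match w with
  | nil => nil
  | a :: w' =>
      match red w' with
      | b :: u => if letter_eqb b (linv a) then u else a :: b :: u
      | nil => a :: nil
      end
  end.

Definition phi_letter (a : letter) : list letter :=
  match a with
  | Xi => Xi :: Nu :: Xi :: nil
  | Nu => Xi :: nil
  | XiInv => XiInv :: NuInv :: XiInv :: nil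
  | NuInv => XiInv :: nil
  end.

Definition phi_word (w : list letter) : list letter := red (flat_map phi_letter w).

Definition phi_iter_xi (i : nat) : list letter := Nat.iter i phi_word (Xi :: nil).

Definition len_phi (i : nat) : nat := length (phi_iter_xi i).

Fixpoint wn (n r : nat) : nat :=
  match n with
  | O => r
  | S m => len_phi (wn m r)
  end.

Fixpoint sum_len (m : nat) : nat :=
  match m with
  | O => len_phi 0
  | S k => (sum_len k + len_phi (S k))%nat
  end.

Definition expn_iter (n : nat) (x : R) : R := Nat.iter n exp x.

(* f <= g : exists C > 0 with f(x) <= C g(Cx) + Cx for all x in N
   (C is taken a positive integer so that g(Cx) makes sense on N). *)
Definition preceq (f g : nat -> R) : Prop :=
  exists C : nat, (0 < C)%nat /\
    forall x : nat, f x <= INR C * g (C * x)%nat + INR C * INR x.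

Definition simeq (f g : nat -> R) : Prop := preceq f g /\ preceq g f.

From Stdlib Require Import Reals List Arith Lia Lra.
Open Scope R_scope.

(* Since phi(xi) and phi(nu) are positive words, phi never cancels along the
   orbit of xi, and phi^(i+2)(xi) = phi^(i+1)(xi) phi^i(xi) phi^(i+1)(xi).
   Hence L_i := |phi^i(xi)| obeys L_(i+2) = 2 L_(i+1) + L_i, so that
   2 L_i <= L_(i+1) <= 3 L_i: the partial sums of the L_i are at most twice
   their last term, and w_n is squeezed between the towers of 2's and of 3's
   of height n, which are both equivalent to exp^n. *)

Definition positive_letter (a : letter) : bool :=
  match a with Xi | Nu => true | XiInv | NuInv => false end.

Lemma red_positive w : forallb positive_letter w = true -> red w = w.
Proof.
  induction w as [|a w IH]; simpl; [reflexivity|].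
  intros [Ha Hw]%andb_prop. rewrite IH by exact Hw.
  destruct w as [|b u]; [reflexivity|].
  destruct a, b; simpl in *; congruence.
Qed.

Lemma positive_flat_map_phi w : forallb positive_letter w = true ->
  forallb positive_letter (flat_map phi_letter w) = true.
Proof.
  rewrite !forallb_forall. intros Hw b [a [Ha Hb]]%in_flat_map.
  specialize (Hw a Ha).
  destruct a; simpl in *; try discriminate;
    repeat destruct Hb as [<- | Hb]; easy.
Qed.

Lemma phi_iter_xi_S_positive i :
  forallb positive_letter (phi_iter_xi i) = true /\
  phi_iter_xi (S i) = flat_map phi_letter (phi_iter_xi i).
Proof.
  induction i as [|i [Hpos Hstep]]; [split; reflexivity|].
  assert (Hpos' : forallb positive_letter (phi_iter_xi (S i)) = true).
  { rewrite Hstep. exact (positive_flat_map_phi _ Hpos). }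
  split; [exact Hpos'|].
  exact (red_positive _ (positive_flat_map_phi _ Hpos')).
Qed.

Lemma phi_iter_xi_S i : phi_iter_xi (S i) = flat_map phi_letter (phi_iter_xi i).
Proof. apply phi_iter_xi_S_positive. Qed.

Lemma phi_iter_xi_SS i :
  phi_iter_xi (S (S i)) = phi_iter_xi (S i) ++ phi_iter_xi i ++ phi_iter_xi (S i).
Proof.
  induction i as [|i IH]; [reflexivity|].
  rewrite (phi_iter_xi_S (S (S i))), IH at 1; rewrite !flat_map_app, <- !phi_iter_xi_S.
  reflexivity.
Qed.

Lemma len_phi_SS i : len_phi (S (S i)) = (2 * len_phi (S i) + len_phi i)%nat.
Proof. unfold len_phi. rewrite phi_iter_xi_SS, !length_app. lia. Qed.

Lemma len_phi_S_bounds i :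
  (2 * len_phi i <= len_phi (S i) <= 3 * len_phi i)%nat.
Proof.
  destruct i as [|i]; [cbv; lia|].
  rewrite len_phi_SS.
  destruct i as [|i]; [cbv; lia|].
  rewrite (len_phi_SS i). lia.
Qed.

Lemma len_phi_bounds i : (2 ^ i <= len_phi i <= 3 ^ i)%nat.
Proof.
  induction i as [|i IH]; [cbv; lia|].
  pose proof (len_phi_S_bounds i). simpl. lia.
Qed.

Lemma len_phi_ge1 i : (1 <= len_phi i)%nat.
Proof. pose proof (len_phi_bounds i). pose proof (Nat.pow_nonzero 2 i). lia. Qed.

Lemma len_phi_mono i j : (i <= j)%nat -> (len_phi i <= len_phi j)%nat.
Proof. induction 1 as [|j _ IH]; [lia|]. pose proof (len_phi_S_bounds j). lia. Qed.

Lemma sum_len_bounds m : (len_phi m <= sum_len m <= 2 * len_phi m)%nat.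
Proof.
  induction m as [|m IH]; simpl; [cbv; lia|].
  pose proof (len_phi_S_bounds m). lia.
Qed.

Lemma sum_len_mono i j : (i <= j)%nat -> (sum_len i <= sum_len j)%nat.
Proof. induction 1; simpl; lia. Qed.

Lemma wn_mono n a b : (a <= b)%nat -> (wn n a <= wn n b)%nat.
Proof. intros Hab. induction n as [|n IH]; simpl; [exact Hab|]. exact (len_phi_mono _ _ IH). Qed.

Fixpoint tower (b n m : nat) : nat :=
  match n with O => m | S k => b ^ tower b k m end.

Lemma tower_ge1 b n m : (1 <= b)%nat -> (1 <= m)%nat -> (1 <= tower b n m)%nat.
Proof.
  intros Hb Hm. destruct n as [|n]; cbn [tower]; [exact Hm|].
  pose proof (Nat.pow_nonzero b (tower b n m)). lia.
Qed.

Lemma tower2_double n m : (1 <= m)%nat -> (2 * tower 2 n m <= tower 2 n (2 * m))%nat.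
Proof.
  intros Hm. induction n as [|n IH]; cbn [tower]; [lia|].
  rewrite <- Nat.pow_succ_r'. apply Nat.pow_le_mono_r; [lia|].
  pose proof (tower_ge1 2 n m). lia.
Qed.

Lemma wn_tower_bounds n r : (tower 2 n r <= wn n r <= tower 3 n r)%nat.
Proof.
  induction n as [|n IH]; simpl; [lia|].
  pose proof (len_phi_bounds (wn n r)).
  pose proof (Nat.pow_le_mono_r 2 _ _ ltac:(lia) (proj1 IH)).
  pose proof (Nat.pow_le_mono_r 3 _ _ ltac:(lia) (proj2 IH)).
  lia.
Qed.

Lemma exp_le_compat a b : a <= b -> exp a <= exp b.
Proof. intros [Hlt | ->]; [left; exact (exp_increasing _ _ Hlt) | right; reflexivity]. Qed.

Lemma pow2_le_exp k : INR (2 ^ k) <= exp (INR k).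
Proof.
  induction k as [|k IH]; [simpl; rewrite exp_0; lra|].
  rewrite S_INR, exp_plus, Nat.pow_succ_r', mult_INR.
  pose proof (exp_ineq1_le 1). pose proof (pos_INR (2 ^ k)). simpl (INR 2). nra.
Qed.

Lemma exp_le_pow4 k : exp (INR k) <= INR (4 ^ k).
Proof.
  induction k as [|k IH]; [simpl; rewrite exp_0; lra|].
  rewrite S_INR, exp_plus, Nat.pow_succ_r', mult_INR.
  pose proof exp_le_3. pose proof (exp_pos (INR k)). simpl (INR 4). nra.
Qed.

Lemma expn_iter_mono n a b : a <= b -> expn_iter n a <= expn_iter n b.
Proof. intros Hab. induction n as [|n IH]; [exact Hab|]. exact (exp_le_compat _ _ IH). Qed.

Lemma expn_iter_ge1 n a : 0 <= a -> 1 <= expn_iter (S n) a.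
Proof.
  intros Ha. rewrite <- exp_0. apply exp_le_compat.
  destruct n as [|n]; [exact Ha|]. left. apply exp_pos.
Qed.

Lemma expn_iter_le_tower2 n r : expn_iter n (INR r) <= INR (tower 2 n (2 ^ n * S r)).
Proof.
  induction n as [|n IH]; [apply le_INR; simpl; lia|].
  set (m := (2 ^ n * S r)%nat) in IH.
  assert (Hm : (1 <= m)%nat) by (pose proof (Nat.pow_le_mono_r 2 0 n); simpl in *; nia).
  eapply Rle_trans; [exact (exp_le_compat _ _ IH)|].
  eapply Rle_trans; [apply exp_le_pow4|]. apply le_INR.
  replace (2 ^ S n * S r)%nat with (2 * m)%nat by (unfold m; rewrite Nat.pow_succ_r'; lia).
  cbn [tower]. replace 4%nat with (2 ^ 2)%nat by reflexivity. rewrite <- Nat.pow_mul_r.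
  apply Nat.pow_le_mono_r; [lia|]. pose proof (tower2_double n m Hm). lia.
Qed.

Lemma four_pow3_le_pow16 t : (1 <= t)%nat -> (4 * 3 ^ t <= 16 ^ t)%nat.
Proof.
  induction 1 as [|t _ IH]; [simpl; lia|].
  rewrite !Nat.pow_succ_r'. lia.
Qed.

(* The factor 4 makes the induction go through: 4 * 3^t <= 2^(4t) <= exp (4t). *)
Lemma tower3_le_expn_iter n r :
  4 * INR (tower 3 (S n) r) <= expn_iter (S n) (INR (4 * r + 4)).
Proof.
  assert (Hfour : forall k, 4 * INR k = INR (4 * k)) by (intros; rewrite mult_INR; simpl; lra).
  induction n as [|n IH].
  - rewrite Hfour. eapply Rle_trans; [|apply pow2_le_exp]. apply le_INR.
    replace (4 * r + 4)%nat with (4 * S r)%nat by lia.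
    rewrite Nat.pow_mul_r. cbn [tower]. simpl (2 ^ 4)%nat.
    pose proof (Nat.pow_le_mono_l 3 16 r ltac:(lia)).
    rewrite Nat.pow_succ_r'. lia.
  - set (t := tower 3 (S n) r) in *.
    assert (Ht : (1 <= t)%nat) by (pose proof (Nat.pow_nonzero 3 (tower 3 n r)); cbn [tower] in t; lia).
    eapply Rle_trans; [|exact (exp_le_compat _ _ IH)].
    rewrite !Hfour. eapply Rle_trans; [|apply pow2_le_exp]. apply le_INR.
    rewrite Nat.pow_mul_r. exact (four_pow3_le_pow16 t Ht).
Qed.

Lemma wn_le_expn_iter n r :
  (1 <= r)%nat -> INR (wn (S n) r) <= expn_iter (S n) (INR (8 * r)).
Proof.
  intros Hr.
  pose proof (le_INR _ _ (proj2 (wn_tower_bounds (S n) r))).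
  pose proof (pos_INR (tower 3 (S n) r)).
  pose proof (tower3_le_expn_iter n r).
  pose proof (expn_iter_mono (S n) _ _ (le_INR (4 * r + 4) (8 * r) ltac:(lia))).
  lra.
Qed.

Lemma expn_iter_le_wn n r :
  (1 <= r)%nat -> expn_iter n (INR r) <= INR (wn n (2 ^ S n * r)).
Proof.
  intros Hr. eapply Rle_trans; [apply expn_iter_le_tower2|]. apply le_INR.
  eapply Nat.le_trans; [apply wn_tower_bounds|]. apply wn_mono.
  rewrite Nat.pow_succ_r'. nia.
Qed.

Lemma wn_S_le_sum_len n r :
  INR (wn (S n) r) <= INR (sum_len (wn n r)) <= 2 * INR (wn (S n) r).
Proof.
  pose proof (sum_len_bounds (wn n r)) as [Hlo Hhi].
  split; [exact (le_INR _ _ Hlo)|].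
  replace 2 with (INR 2) by reflexivity. rewrite <- mult_INR. exact (le_INR _ _ Hhi).
Qed.

Lemma preceq_of_le_dilate (f g : nat -> R) (a b c : nat) :
  Un_growing g -> 1 <= g 0%nat -> f 0%nat <= INR c ->
  (forall x, (1 <= x)%nat -> f x <= INR a * g (b * x)%nat) -> preceq f g.
Proof.
  intros Hg Hg0 Hf0 Hfg. exists (a + b + c + 1)%nat. split; [lia|].
  intros x. set (K := (a + b + c + 1)%nat).
  assert (HK : INR a + INR c + 1 <= INR K).
  { unfold K. rewrite !plus_INR. pose proof (pos_INR b). simpl. lra. }
  assert (Hg_ge1 : forall y, 1 <= g y) by (intros y; pose proof (growing_prop g y 0 Hg ltac:(lia)); lra).
  pose proof (Hg_ge1 (K * x)%nat). pose proof (pos_INR a). pose proof (pos_INR c).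
  pose proof (pos_INR K). pose proof (pos_INR x).
  destruct x as [|x].
  - rewrite Nat.mul_0_r. nra.
  - pose proof (Hfg (S x) ltac:(lia)).
    pose proof (growing_prop g (K * S x) (b * S x) Hg ltac:(unfold K; nia)).
    nra.
Qed.

Theorem lemma5p1 : forall n : nat, (1 <= n)%nat ->
  let F1 := fun r : nat => INR (sum_len (wn (n - 1) r)) in
  let F2 := fun r : nat => INR (wn n r) in
  let F3 := fun r : nat => expn_iter n (INR r) in
  simeq F1 F2 /\ simeq F2 F3 /\ simeq F1 F3.
Proof.
  intros [|k] Hk; [lia|]. rewrite Nat.sub_1_r. intros F1 F2 F3.
  assert (HF12 : forall r, F2 r <= F1 r <= 2 * F2 r) by exact (wn_S_le_sum_len k).
  assert (HF23 : forall r, (1 <= r)%nat -> F2 r <= F3 (8 * r)%nat) by exact (wn_le_expn_iter k).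
  assert (HF32 : forall r, (1 <= r)%nat -> F3 r <= F2 (2 ^ S (S k) * r)%nat)
    by exact (expn_iter_le_wn (S k)).
  assert (HF3_0 : F3 0%nat <= INR (tower 2 (S k) (2 ^ S k * 1))) by apply expn_iter_le_tower2.
  assert (HF2_ge1 : forall r, 1 <= F2 r) by (intros r; apply (le_INR 1), len_phi_ge1).
  assert (HF1_ge1 : 1 <= F1 0%nat) by (pose proof (HF12 0%nat); pose proof (HF2_ge1 0%nat); lra).
  assert (HF3_ge1 : 1 <= F3 0%nat) by (apply expn_iter_ge1, pos_INR).
  assert (HF1_grow : Un_growing F1) by (intros r; apply le_INR, sum_len_mono, wn_mono; lia).
  assert (HF2_grow : Un_growing F2) by (intros r; apply le_INR, wn_mono; lia).
  assert (HF3_grow : Un_growing F3) by (intros r; apply expn_iter_mono, le_INR; lia).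
  assert (HF2_2r : forall r, F2 r <= F2 (2 * r)%nat)
    by (intros r; apply Rge_le, growing_prop; [exact HF2_grow | lia]).
  split; [|split]; split.
  - apply (preceq_of_le_dilate F1 F2 2 2 (sum_len (wn k 0)) HF2_grow (HF2_ge1 0%nat) (Rle_refl _)).
    intros x _. pose proof (HF12 x). pose proof (HF2_2r x). simpl (INR 2). lra.
  - apply (preceq_of_le_dilate F2 F1 1 1 (wn (S k) 0) HF1_grow HF1_ge1 (Rle_refl _)).
    intros x _. rewrite Nat.mul_1_l. simpl (INR 1). pose proof (HF12 x). lra.
  - apply (preceq_of_le_dilate F2 F3 1 8 (wn (S k) 0) HF3_grow HF3_ge1 (Rle_refl _)).
    intros x Hx. simpl (INR 1). rewrite Rmult_1_l. exact (HF23 x Hx).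
  - apply (preceq_of_le_dilate F3 F2 1 (2 ^ S (S k)) _ HF2_grow (HF2_ge1 0%nat) HF3_0).
    intros x Hx. simpl (INR 1). rewrite Rmult_1_l. exact (HF32 x Hx).
  - apply (preceq_of_le_dilate F1 F3 2 8 (sum_len (wn k 0)) HF3_grow HF3_ge1 (Rle_refl _)).
    intros x Hx. pose proof (HF12 x). pose proof (HF23 x Hx). simpl (INR 2). lra.
  - apply (preceq_of_le_dilate F3 F1 1 (2 ^ S (S k)) _ HF1_grow HF1_ge1 HF3_0).
    intros x Hx. simpl (INR 1). pose proof (HF12 (2 ^ S (S k) * x)%nat). pose proof (HF32 x Hx). lra.
Qed.
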